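(* Fix $f \in (0,1)$, integers $p, q \ge 2$, and $r_1,\dots,r_{n} \in [0,1)$. Then there is a decomposition of $\mathcal{D}_f^{p,q}$ by at most $n$ hyperplanes (lines in the $(s_1,s_2)$-plane) such that, within each region of the decomposition, each of the functions $(s_1,s_2)\mapsto \pi_{f,s_1,s_2}^{p,q}(r_j)$, $j=1,\dots,n$, is a fixed affine linear function of $(s_1, s_2)$.
   Context: For $f\in(0,1)$, integers $p,q\ge 2$ and $s_1,s_2\in\mathbb{R}$, define for $r\in[0,1)$ $$\pi_{f,s_1,s_2}^{p,q}(r) = \max \Big( \big\{\min\{\phi_i^1(r),\phi_i^2(r)\}:i=1,\dots,p\big\}\cup\big\{ \min\{ \psi_j^1(r),\psi_j^2(r) \}: j=1,\dots,q-1 \big\} \Big),$$ where $\phi_i^1(r) = s_1 r + i \frac{1-fs_1}{p}$, $\phi_i^2(r) = s_2 r + (i-1)\frac{1-fs_2}{p-1}$ for $i=1,\dots,p$, and $\psi_j^1(r) = s_1(r-1) + (j-1) \frac{1+(1-f)s_1}{q-1}$, $\psi_j^2(r) = s_2(r-1) + j \frac{1+(1-f)s_2}{q}$ for $j=1,\dots,q-1$. $\mathcal{D}_f^{p,q}$ is the set of $(s_1,s_2)$ for which this function (extended with period $1$) is a valid cut generating function, namely $\pi(0)=0$, $\pi(f)=1$, $\pi$ subadditive and $1$-periodic; explicitly, $\mathcal{D}_f^{p,q} = I_1\times I_2$ where $I_1=\left[\frac{p+q-1}{(p+q-1)f-p},\frac{1}{f-1}\right]$ if $(p+q-1)f-p<0$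 and $I_1=\left(-\infty,\frac{1}{f-1}\right]$ otherwise, and $I_2=\left[\frac1f,\frac{p+q-1}{q-(p+q-1)(1-f)}\right]$ if $(p+q-1)(1-f)-q<0$ and $I_2=\left[\frac1f,+\infty\right)$ otherwise. *)

From Stdlib Require Import Reals Lra List.
Import ListNotations.
Open Scope R_scope.

Definition phi1 (f : R) (p : nat) (s1 r : R) (i : nat) : R :=
  s1 * r + INR i * ((1 - f * s1) / INR p).
Definition phi2 (f : R) (p : nat) (s2 r : R) (i : nat) : R :=
  s2 * r + (INR i - 1) * ((1 - f * s2) / (INR p - 1)).
Definition psi1 (f : R) (q : nat) (s1 r : R) (j : nat) : R :=
  s1 * (r - 1) + (INR j - 1) * ((1 + (1 - f) * s1) / (INR q - 1)).
Definition psi2 (f : R) (q : nat) (s2 r : R) (j : nat) : R :=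
  s2 * (r - 1) + INR j * ((1 + (1 - f) * s2) / INR q).

Definition pi_candidates (f : R) (p q : nat) (s1 s2 r : R) : list R :=
  map (fun i => Rmin (phi1 f p s1 r i) (phi2 f p s2 r i)) (seq 1 p)
  ++ map (fun j => Rmin (psi1 f q s1 r j) (psi2 f q s2 r j)) (seq 1 (q - 1)).

(* pi_{f,s1,s2}^{p,q}(r) for r in [0,1): the maximum of the candidates.
   The base value of the fold is the i = 1 candidate, which belongs to the list
   (p >= 2), so this is exactly the maximum. *)
Definition pi_fun (f : R) (p q : nat) (s1 s2 r : R) : R :=
  fold_right Rmax (Rmin (phi1 f p s1 r 1) (phi2 f p s2 r 1))
    (pi_candidates f p q s1 s2 r).

Definition in_I1 (f : R) (p q : nat) (s1 : R) : Prop :=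
  if Rlt_dec ((INR p + INR q - 1) * f - INR p) 0
  then (INR p + INR q - 1) / ((INR p + INR q - 1) * f - INR p) <= s1
       /\ s1 <= 1 / (f - 1)
  else s1 <= 1 / (f - 1).

Definition in_I2 (f : R) (p q : nat) (s2 : R) : Prop :=
  if Rlt_dec ((INR p + INR q - 1) * (1 - f) - INR q) 0
  then 1 / f <= s2
       /\ s2 <= (INR p + INR q - 1) / (INR q - (INR p + INR q - 1) * (1 - f))
  else 1 / f <= s2.

Definition in_D (f : R) (p q : nat) (s1 s2 : R) : Prop :=
  in_I1 f p q s1 /\ in_I2 f p q s2.

(* A line (hyperplane) a*s1 + b*s2 + c = 0 in the (s1,s2)-plane, encoded as (a,b,c). *)
Definition line_ok (L : R * R * R) : Prop :=
  let '(a, b, _) := L in a <> 0 \/ b <> 0.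

Definition side (L : R * R * R) (s1 s2 : R) : comparison :=
  let '(a, b, c) := L in
  let v := a * s1 + b * s2 + c in
  if Rlt_dec v 0 then Lt else if Rlt_dec 0 v then Gt else Eq.

Definition same_region (Ls : list (R * R * R)) (s1 s2 t1 t2 : R) : Prop :=
  forall L, In L Ls -> side L s1 s2 = side L t1 t2.

From Stdlib Require Import Reals List Lra Lia.
Import ListNotations.
Open Scope R_scope.

(* The lines phi_i^1, psi_j^1 have slope s1, the lines phi_i^2, psi_j^2 have slope s2, and
   each of them passes through a point of the graph of the Gomory function
   g(x) = min(x/f, (1-x)/(1-f)).  On D_f^{p,q} we have s1 <= -1/(1-f) and s2 >= 1/f, so such a
   line is steeper than both branches of g: it lies above g on one side of its anchor point
   and below g on the other.  Ordered suitably, the anchors b_k of the s2-lines and a_k of the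
   s1-lines interleave, 0 = b_0 <= a_0 <= b_1 <= a_1 <= ... <= a_(p+q-2) = 1.  Hence if
   b_k <= r <= a_k, pi(r) is the k-th candidate min(A_k(s1), B_k(s2)), and if
   a_k <= r <= b_(k+1), pi(r) = max(A_k(s1), B_(k+1)(s2)).  Either way pi(r) is affine on each
   side of the line A = B, and the lines for r_1, ..., r_n form the decomposition. *)

Lemma Rdiv_le_cross a b c d : 0 < b -> 0 < d -> a * d <= c * b -> a / b <= c / d.
Proof.
  intros Hb Hd H.
  replace (a / b) with (a * d * / (b * d)) by (field; lra).
  replace (c / d) with (c * b * / (b * d)) by (field; lra).
  apply Rmult_le_compat_r; [left; apply Rinv_0_lt_compat; nra | exact H].
Qed.

Lemma Rdiv_unit_interval a b : 0 <= a <= b -> 0 < b -> 0 <= a / b <= 1.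
Proof.
  intros Ha Hb. split.
  - apply Rmult_le_pos; [lra | left; apply Rinv_0_lt_compat; lra].
  - replace 1 with (b / b) by (field; lra). apply Rdiv_le_cross; nra.
Qed.

Lemma INR_ge_2 n : (2 <= n)%nat -> 2 <= INR n.
Proof. intros H. apply le_INR in H. simpl in H. lra. Qed.

Lemma fold_right_Rmax_ub b l x : In x (b :: l) -> x <= fold_right Rmax b l.
Proof.
  induction l as [|y l IH]; cbn -[In]; intros Hx.
  - destruct Hx as [->|[]]; lra.
  - destruct Hx as [->|[->|Hx]].
    + eapply Rle_trans; [apply IH; left; reflexivity | apply Rmax_r].
    + apply Rmax_l.
    + eapply Rle_trans; [apply IH; right; exact Hx | apply Rmax_r].
Qed.

Lemma fold_right_Rmax_lub b l V : (forall x, In x (b :: l) -> x <= V) -> fold_right Rmax b l <= V.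
Proof.
  induction l as [|y l IH]; cbn -[In]; intros HV.
  - apply HV; left; reflexivity.
  - apply Rmax_lub; [apply HV; right; left; reflexivity|].
    apply IH; intros x [->|Hx]; apply HV; [left | right; right]; auto.
Qed.

Section Gomory.

Variable f : R.
Hypothesis f_01 : 0 < f < 1.

Definition gomory (x : R) : R := Rmin (x / f) ((1 - x) / (1 - f)).

Definition gline (s x0 y : R) : R := s * (y - x0) + gomory x0.

Lemma gomory_slopes x y : x <= y ->
  gomory y - gomory x <= (y - x) / f /\ gomory x - gomory y <= (y - x) / (1 - f).
Proof.
  intros Hxy. unfold gomory, Rmin, Rdiv.
  assert (0 < / f) by (apply Rinv_0_lt_compat; lra).
  assert (0 < / (1 - f)) by (apply Rinv_0_lt_compat; lra).
  destruct (Rle_dec (x * / f) ((1 - x) * / (1 - f)));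
  destruct (Rle_dec (y * / f) ((1 - y) * / (1 - f))); split; nra.
Qed.

Lemma steep_slope s : 1 / f <= s -> forall d, 0 <= d -> d / f <= s * d.
Proof. intros Hs d Hd. unfold Rdiv in *. nra. Qed.

Lemma falling_slope s : s <= 1 / (f - 1) -> forall d, 0 <= d -> s * d <= - (d / (1 - f)).
Proof.
  intros Hs d Hd. replace (1 / (f - 1)) with (- / (1 - f)) in Hs by (field; lra).
  unfold Rdiv. nra.
Qed.

Lemma gline_steep_ge s x0 y : 1 / f <= s -> x0 <= y -> gomory y <= gline s x0 y.
Proof.
  intros Hs H. destruct (gomory_slopes x0 y H) as [Hrise _].
  pose proof (steep_slope s Hs (y - x0)). unfold gline. lra.
Qed.

Lemma gline_steep_le s x0 y : 1 / f <= s -> y <= x0 -> gline s x0 y <= gomory y.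
Proof.
  intros Hs H. destruct (gomory_slopes y x0 H) as [Hrise _].
  pose proof (steep_slope s Hs (x0 - y)). unfold gline. lra.
Qed.

Lemma gline_falling_le s x0 y : s <= 1 / (f - 1) -> x0 <= y -> gline s x0 y <= gomory y.
Proof.
  intros Hs H. destruct (gomory_slopes x0 y H) as [_ Hfall].
  pose proof (falling_slope s Hs (y - x0)). unfold gline. lra.
Qed.

Lemma gline_falling_ge s x0 y : s <= 1 / (f - 1) -> y <= x0 -> gomory y <= gline s x0 y.
Proof.
  intros Hs H. destruct (gomory_slopes y x0 H) as [_ Hfall].
  pose proof (falling_slope s Hs (x0 - y)). unfold gline. lra.
Qed.

Lemma gline_steep_antitone s x x' y : 1 / f <= s -> x' <= x -> gline s x y <= gline s x' y.
Proof. intros Hs H. pose proof (gline_steep_ge s x' x Hs H). unfold gline in *. lra. Qed.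

Lemma gline_falling_monotone s x x' y : s <= 1 / (f - 1) -> x <= x' -> gline s x y <= gline s x' y.
Proof. intros Hs H. pose proof (gline_falling_le s x x' Hs H). unfold gline in *. lra. Qed.

Lemma gomory_left u : 0 <= u <= 1 -> gomory (u * f) = u.
Proof.
  intros Hu. unfold gomory. rewrite Rmin_left; [field; lra|].
  replace (u * f / f) with u by (field; lra).
  replace ((1 - u * f) / (1 - f)) with (u + (1 - u) / (1 - f)) by (field; lra).
  assert (0 <= (1 - u) / (1 - f))
    by (apply Rmult_le_pos; [lra | left; apply Rinv_0_lt_compat; lra]).
  lra.
Qed.

Lemma gomory_right u : 0 <= u <= 1 -> gomory (1 - u * (1 - f)) = u.
Proof.
  intros Hu. unfold gomory. rewrite Rmin_right; [field; lra|].
  replace ((1 - (1 - u * (1 - f))) / (1 - f)) with u by (field; lra).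
  replace ((1 - u * (1 - f)) / f) with (u + (1 - u) / f) by (field; lra).
  assert (0 <= (1 - u) / f) by (apply Rmult_le_pos; [lra | left; apply Rinv_0_lt_compat; lra]).
  lra.
Qed.

End Gomory.

Section Interleaved.

Variables (a b : nat -> R) (N : nat).
Hypothesis b_le_a : forall k, (k < N)%nat -> b k <= a k.
Hypothesis a_le_b_succ : forall k, (S k < N)%nat -> a k <= b (S k).

Lemma interleaved_a_le_b l k : (l < k)%nat -> (k < N)%nat -> a l <= b k.
Proof.
  intros Hlk. induction Hlk as [|k Hlk IH]; intros Hk.
  - now apply a_le_b_succ.
  - specialize (IH ltac:(lia)). specialize (b_le_a k ltac:(lia)).
    specialize (a_le_b_succ k Hk). lra.
Qed.

Lemma interleaved_a_monotone l k : (l <= k)%nat -> (k < N)%nat -> a l <= a k.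
Proof.
  intros Hlk Hk. destruct (Nat.eq_dec l k) as [->|Hne]; [lra|].
  pose proof (interleaved_a_le_b l k ltac:(lia) Hk). specialize (b_le_a k Hk). lra.
Qed.

Lemma interleaved_b_monotone l k : (l <= k)%nat -> (k < N)%nat -> b l <= b k.
Proof.
  intros Hlk Hk. destruct (Nat.eq_dec l k) as [->|Hne]; [lra|].
  pose proof (interleaved_a_le_b l k ltac:(lia) Hk). specialize (b_le_a l ltac:(lia)). lra.
Qed.

Lemma interleaved_locate r m : b 0 <= r -> (m < N)%nat -> r <= a m ->
  exists k, (k < N)%nat /\
    ((b k <= r <= a k) \/ ((S k < N)%nat /\ a k <= r <= b (S k))).
Proof.
  intros H0. induction m as [|m IH]; intros Hm Hr.
  - exists 0%nat. split; [lia | left; lra].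
  - destruct (Rle_dec r (a m)) as [Hle|Hgt]; [apply IH; auto; lia|].
    destruct (Rle_dec r (b (S m))) as [Hle'|Hgt'].
    + exists m. split; [lia | right; split; [lia | lra]].
    + exists (S m). split; [lia | left; lra].
Qed.

End Interleaved.

Definition affine (w : R * R * R) (s1 s2 : R) : R :=
  let '(a, b, c) := w in a * s1 + b * s2 + c.

Definition affine_on_regions (D : R -> R -> Prop) (Ls : list (R * R * R))
    (F : R -> R -> R) : Prop :=
  forall t1 t2, D t1 t2 -> exists a b c : R,
    forall s1 s2, D s1 s2 -> same_region Ls s1 s2 t1 t2 -> F s1 s2 = a * s1 + b * s2 + c.

Lemma side_Gt L s1 s2 : side L s1 s2 = Gt -> 0 < affine L s1 s2.
Proof.
  destruct L as [[a b] c]. unfold side, affine.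
  destruct (Rlt_dec _ 0); [discriminate|]. destruct (Rlt_dec 0 _); [auto | discriminate].
Qed.

Lemma side_not_Gt L s1 s2 : side L s1 s2 <> Gt -> affine L s1 s2 <= 0.
Proof.
  destruct L as [[a b] c]. unfold side, affine.
  destruct (Rlt_dec _ 0); [lra|]. destruct (Rlt_dec 0 _); [congruence | lra].
Qed.

Lemma affine_on_regions_switch D F u v w1 w2 :
  (forall s1 s2, D s1 s2 -> affine u s1 s2 <= affine v s1 s2 -> F s1 s2 = affine w1 s1 s2) ->
  (forall s1 s2, D s1 s2 -> affine v s1 s2 <= affine u s1 s2 -> F s1 s2 = affine w2 s1 s2) ->
  exists L, line_ok L /\ affine_on_regions D [L] F.
Proof.
  intros Hw1 Hw2.
  destruct u as [[u1 u2] u0], v as [[v1 v2] v0].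
  set (L := (u1 - v1, u2 - v2, u0 - v0)).
  assert (HL : forall s1 s2, affine L s1 s2 = affine (u1, u2, u0) s1 s2 - affine (v1, v2, v0) s1 s2)
    by (intros; cbn; ring).
  assert (Hglobal : forall w, (forall s1 s2, D s1 s2 -> F s1 s2 = affine w s1 s2) ->
            forall Ls, affine_on_regions D Ls F).
  { intros [[a b] c] Hw Ls t1 t2 _. exists a, b, c. intros s1 s2 Hs _. exact (Hw s1 s2 Hs). }
  assert (Hsplit : affine_on_regions D [L] F).
  { intros t1 t2 _.
    assert (Ht : side L t1 t2 = Gt \/ side L t1 t2 <> Gt)
      by (destruct (side L t1 t2); auto; right; discriminate).
    destruct Ht as [Ht|Ht].
    - destruct w2 as [[a b] c]. exists a, b, c. intros s1 s2 Hs Hreg.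
      rewrite <- (Hreg L (in_eq _ _)) in Ht. apply side_Gt in Ht.
      apply Hw2; auto. rewrite HL in Ht. lra.
    - destruct w1 as [[a b] c]. exists a, b, c. intros s1 s2 Hs Hreg.
      rewrite <- (Hreg L (in_eq _ _)) in Ht. apply side_not_Gt in Ht.
      apply Hw1; auto. rewrite HL in Ht. lra. }
  destruct (Req_dec (u1 - v1) 0) as [H1|H1]; [destruct (Req_dec (u2 - v2) 0) as [H2|H2]|].
  - (* [u - v] is constant: one of [w1], [w2] applies on all of [D], so any line will do. *)
    exists (1, 0, 0). split; [left; lra|].
    destruct (Rle_dec u0 v0); [apply (Hglobal w1) | apply (Hglobal w2)];
      intros s1 s2 Hs; [apply Hw1 | apply Hw2]; auto; pose proof (HL s1 s2); cbn in *; nra.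
  - exists L. split; [right|]; assumption.
  - exists L. split; [left|]; assumption.
Qed.

Lemma affine_on_regions_incl D Ls Ls' F :
  incl Ls Ls' -> affine_on_regions D Ls F -> affine_on_regions D Ls' F.
Proof.
  intros Hincl HF t1 t2 Ht. destruct (HF t1 t2 Ht) as [a [b [c Habc]]].
  exists a, b, c. intros s1 s2 Hs Hreg. apply Habc; auto.
  intros L HL. apply Hreg, Hincl, HL.
Qed.

Lemma common_refinement D (F : nat -> R -> R -> R) n :
  (forall j, (j < n)%nat -> exists L, line_ok L /\ affine_on_regions D [L] (F j)) ->
  exists Ls, (length Ls <= n)%nat /\ (forall L, In L Ls -> line_ok L) /\
    forall j, (j < n)%nat -> affine_on_regions D Ls (F j).
Proof.
  induction n as [|n IH]; intros HF.
  - exists []. split; [auto | split; [contradiction | intros; lia]].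
  - destruct IH as [Ls [Hlen [Hok HLs]]]; [intros j Hj; apply HF; lia|].
    destruct (HF n ltac:(lia)) as [L [HL HFL]].
    exists (L :: Ls). split; [cbn; lia|]. split; [intros L' [<-|HL']; auto|].
    intros j Hj. destruct (Nat.eq_dec j n) as [->|Hne].
    + apply (affine_on_regions_incl D [L]); [intros x [<-|[]]; left |]; auto.
    + apply (affine_on_regions_incl D Ls); [intros x Hx; right |]; auto with arith.
      apply HLs. lia.
Qed.

Lemma in_D_slopes f p q s1 s2 : in_D f p q s1 s2 -> s1 <= 1 / (f - 1) /\ 1 / f <= s2.
Proof. unfold in_D, in_I1, in_I2. destruct (Rlt_dec _ 0), (Rlt_dec _ 0); tauto. Qed.

Section Anchors.

Variables (f : R) (p q : nat).
Hypothesis f_01 : 0 < f < 1.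
Hypothesis p_ge_2 : (2 <= p)%nat.
Hypothesis q_ge_2 : (2 <= q)%nat.

Lemma phi1_gline s1 r i : (1 <= i <= p)%nat ->
  phi1 f p s1 r i = gline f s1 (INR i / INR p * f) r.
Proof.
  intros Hi. pose proof (INR_ge_2 p p_ge_2). apply proj2, le_INR in Hi.
  unfold gline. rewrite gomory_left by (auto; apply Rdiv_unit_interval; auto using pos_INR; lra).
  unfold phi1. field. lra.
Qed.

Lemma phi2_gline s2 r i : (1 <= i <= p)%nat ->
  phi2 f p s2 r i = gline f s2 ((INR i - 1) / (INR p - 1) * f) r.
Proof.
  intros [Hi1 Hip]. pose proof (INR_ge_2 p p_ge_2). apply le_INR in Hi1, Hip. simpl in Hi1.
  unfold gline. rewrite gomory_left by (auto; apply Rdiv_unit_interval; lra).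
  unfold phi2. field. lra.
Qed.

Lemma psi1_gline s1 r j : (1 <= j <= q - 1)%nat ->
  psi1 f q s1 r j = gline f s1 (1 - (INR j - 1) / (INR q - 1) * (1 - f)) r.
Proof.
  intros [Hj1 Hjq]. pose proof (INR_ge_2 q q_ge_2). apply le_INR in Hj1, Hjq. simpl in Hj1.
  rewrite minus_INR in Hjq by lia. simpl in Hjq.
  unfold gline. rewrite gomory_right by (auto; apply Rdiv_unit_interval; lra).
  unfold psi1. field. lra.
Qed.

Lemma psi2_gline s2 r j : (1 <= j <= q - 1)%nat ->
  psi2 f q s2 r j = gline f s2 (1 - INR j / INR q * (1 - f)) r.
Proof.
  intros [Hj1 Hjq]. pose proof (INR_ge_2 q q_ge_2). apply le_INR in Hj1, Hjq. simpl in Hj1.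
  rewrite minus_INR in Hjq by lia. simpl in Hjq.
  unfold gline. rewrite gomory_right by (auto; apply Rdiv_unit_interval; lra).
  unfold psi2. field. lra.
Qed.

Local Notation N := (p + q - 1)%nat.

(* Candidate [k < N] is the pair (phi_(k+1)^1, phi_(k+1)^2) when [k < p] and the pair
   (psi_(N-k)^1, psi_(N-k)^2) otherwise; [anchor1 k] and [anchor2 k] are the points where
   its two lines meet the graph of [gomory]. *)
Definition anchor1 (k : nat) : R :=
  if (k <? p)%nat then INR (S k) / INR p * f
  else 1 - (INR (p + q - 1 - k) - 1) / (INR q - 1) * (1 - f).

Definition anchor2 (k : nat) : R :=
  if (k <? p)%nat then (INR (S k) - 1) / (INR p - 1) * f
  else 1 - INR (p + q - 1 - k) / INR q * (1 - f).

Definition piece (s1 s2 r : R) (k : nat) : R :=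
  Rmin (gline f s1 (anchor1 k) r) (gline f s2 (anchor2 k) r).

Lemma piece_phi s1 s2 r k : (k < p)%nat ->
  piece s1 s2 r k = Rmin (phi1 f p s1 r (S k)) (phi2 f p s2 r (S k)).
Proof.
  intros Hk. unfold piece, anchor1, anchor2.
  replace (k <? p)%nat with true by (symmetry; apply Nat.ltb_lt; lia).
  rewrite phi1_gline, phi2_gline by lia. reflexivity.
Qed.

Lemma piece_psi s1 s2 r k : (p <= k < N)%nat ->
  piece s1 s2 r k = Rmin (psi1 f q s1 r (N - k)) (psi2 f q s2 r (N - k)).
Proof.
  intros Hk. unfold piece, anchor1, anchor2.
  replace (k <? p)%nat with false by (symmetry; apply Nat.ltb_ge; lia).
  rewrite psi1_gline, psi2_gline by lia. reflexivity.
Qed.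

Lemma In_pi_candidates s1 s2 r x :
  In x (pi_candidates f p q s1 s2 r) <-> exists k, (k < N)%nat /\ x = piece s1 s2 r k.
Proof.
  unfold pi_candidates. rewrite in_app_iff, !in_map_iff. split.
  - intros [[i [<- Hi]]|[j [<- Hj]]]; apply in_seq in Hi || apply in_seq in Hj.
    + exists (i - 1)%nat. split; [lia|].
      rewrite piece_phi by lia. now replace (S (i - 1)) with i by lia.
    + exists (N - j)%nat. split; [lia|].
      rewrite piece_psi by lia. now replace (N - (N - j))%nat with j by lia.
  - intros [k [Hk ->]]. destruct (Nat.lt_ge_cases k p) as [Hkp|Hkp].
    + left. exists (S k). rewrite piece_phi by lia. split; [reflexivity | apply in_seq; lia].
    + right. exists (N - k)%nat. rewrite piece_psi by lia. split; [reflexivity | apply in_seq; lia].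
Qed.

Lemma anchor2_first : anchor2 0 = 0.
Proof.
  unfold anchor2. replace (0 <? p)%nat with true by (symmetry; apply Nat.ltb_lt; lia).
  simpl. field. pose proof (INR_ge_2 p p_ge_2). lra.
Qed.

Lemma anchor1_last : anchor1 (N - 1) = 1.
Proof.
  unfold anchor1. replace (N - 1 <? p)%nat with false by (symmetry; apply Nat.ltb_ge; lia).
  replace (N - (N - 1))%nat with 1%nat by lia. simpl. field. pose proof (INR_ge_2 q q_ge_2). lra.
Qed.

Lemma anchor2_le_anchor1 k : (k < N)%nat -> anchor2 k <= anchor1 k.
Proof.
  intros Hk. pose proof (INR_ge_2 p p_ge_2). pose proof (INR_ge_2 q q_ge_2).
  unfold anchor1, anchor2. destruct (Nat.ltb_spec k p) as [Hkp|Hkp].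
  - assert (Hi : INR (S k) <= INR p) by (apply le_INR; lia). rewrite S_INR in *.
    pose proof (pos_INR k).
    apply Rmult_le_compat_r; [lra|]. apply Rdiv_le_cross; nra.
  - assert (Hj : 1 <= INR (N - k) /\ INR (N - k) <= INR q)
      by (split; [apply (le_INR 1) | apply le_INR]; lia).
    assert ((INR (N - k) - 1) / (INR q - 1) <= INR (N - k) / INR q) by (apply Rdiv_le_cross; nra).
    nra.
Qed.

Lemma anchor1_le_anchor2_succ k : (S k < N)%nat -> anchor1 k <= anchor2 (S k).
Proof.
  intros Hk. pose proof (INR_ge_2 p p_ge_2). pose proof (INR_ge_2 q q_ge_2).
  unfold anchor1, anchor2. destruct (Nat.ltb_spec k p) as [Hkp|Hkp];
    destruct (Nat.ltb_spec (S k) p) as [HSkp|HSkp]; try lia.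
  - pose proof (pos_INR (S k)).
    replace (INR (S (S k)) - 1) with (INR (S k)) by (rewrite (S_INR (S k)); ring).
    apply Rmult_le_compat_r; [lra|]. apply Rdiv_le_cross; nra.
  - replace (S k) with p by lia.
    assert (Hj : INR (N - p) <= INR q) by (apply le_INR; lia).
    assert (INR (N - p) / INR q <= 1) by (apply Rdiv_unit_interval; auto using pos_INR; lra).
    replace (INR p / INR p) with 1 by (field; lra). nra.
  - replace (N - k)%nat with (S (N - S k)) by lia. rewrite S_INR.
    assert (Hj : INR (N - S k) <= INR q) by (apply le_INR; lia).
    pose proof (pos_INR (N - S k)).
    assert (INR (N - S k) / INR q <= (INR (N - S k) + 1 - 1) / (INR q - 1))
      by (apply Rdiv_le_cross; nra).
    nra.
Qed.

Lemma anchor1_le_anchor2 l k : (l < k)%nat -> (k < N)%nat -> anchor1 l <= anchor2 k.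
Proof. exact (interleaved_a_le_b _ _ _ anchor2_le_anchor1 anchor1_le_anchor2_succ l k). Qed.

Lemma anchor1_monotone l k : (l <= k)%nat -> (k < N)%nat -> anchor1 l <= anchor1 k.
Proof. exact (interleaved_a_monotone _ _ _ anchor2_le_anchor1 anchor1_le_anchor2_succ l k). Qed.

Lemma anchor2_monotone l k : (l <= k)%nat -> (k < N)%nat -> anchor2 l <= anchor2 k.
Proof. exact (interleaved_b_monotone _ _ _ anchor2_le_anchor1 anchor1_le_anchor2_succ l k). Qed.

Lemma pi_fun_eq_of_max s1 s2 r V :
  (exists k, (k < N)%nat /\ V = piece s1 s2 r k) ->
  (forall k, (k < N)%nat -> piece s1 s2 r k <= V) ->
  pi_fun f p q s1 s2 r = V.
Proof.
  intros HV Hle. unfold pi_fun. rewrite <- (piece_phi s1 s2 r 0) by lia.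
  apply Rle_antisym.
  - apply fold_right_Rmax_lub. intros x [<-|Hx]; [apply Hle; lia|].
    apply In_pi_candidates in Hx as [k [Hk ->]]. auto.
  - apply fold_right_Rmax_ub. right. now apply In_pi_candidates.
Qed.

Lemma pi_fun_piece s1 s2 r k : in_D f p q s1 s2 -> (k < N)%nat ->
  anchor2 k <= r <= anchor1 k -> pi_fun f p q s1 s2 r = piece s1 s2 r k.
Proof.
  intros HD Hk Hr. destruct (in_D_slopes f p q s1 s2 HD) as [Hs1 Hs2].
  assert (Hg : gomory f r <= piece s1 s2 r k).
  { apply Rmin_glb; [apply gline_falling_ge | apply gline_steep_ge]; tauto. }
  apply pi_fun_eq_of_max; [eauto|].
  intros l Hl. destruct (Nat.lt_total l k) as [Hlk|[ ->|Hkl]]; [| lra |].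
  - pose proof (anchor1_le_anchor2 l k Hlk Hk).
    pose proof (gline_falling_le f f_01 s1 (anchor1 l) r Hs1 ltac:(lra)).
    pose proof (Rmin_l (gline f s1 (anchor1 l) r) (gline f s2 (anchor2 l) r)).
    unfold piece in *. lra.
  - pose proof (anchor1_le_anchor2 k l Hkl Hl).
    pose proof (gline_steep_le f f_01 s2 (anchor2 l) r Hs2 ltac:(lra)).
    pose proof (Rmin_r (gline f s1 (anchor1 l) r) (gline f s2 (anchor2 l) r)).
    unfold piece in *. lra.
Qed.

Lemma pi_fun_gap s1 s2 r k : in_D f p q s1 s2 -> (S k < N)%nat ->
  anchor1 k <= r <= anchor2 (S k) ->
  pi_fun f p q s1 s2 r = Rmax (gline f s1 (anchor1 k) r) (gline f s2 (anchor2 (S k)) r).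
Proof.
  intros HD HSk Hr. destruct (in_D_slopes f p q s1 s2 HD) as [Hs1 Hs2].
  pose proof (anchor2_le_anchor1 k ltac:(lia)). pose proof (anchor2_le_anchor1 (S k) HSk).
  assert (Hk : piece s1 s2 r k = gline f s1 (anchor1 k) r).
  { apply Rmin_left. apply Rle_trans with (gomory f r).
    - apply gline_falling_le; tauto.
    - apply gline_steep_ge; auto; lra. }
  assert (HSk' : piece s1 s2 r (S k) = gline f s2 (anchor2 (S k)) r).
  { apply Rmin_right. apply Rle_trans with (gomory f r).
    - apply gline_steep_le; tauto.
    - apply gline_falling_ge; auto; lra. }
  apply pi_fun_eq_of_max.
  - unfold Rmax. destruct (Rle_dec _ _); [exists (S k) | exists k]; split; auto; lia.
  - intros l Hl. destruct (Nat.le_gt_cases l k) as [Hlk|Hkl].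
    + pose proof (anchor1_monotone l k Hlk ltac:(lia)).
      pose proof (gline_falling_monotone f f_01 s1 (anchor1 l) (anchor1 k) r Hs1 ltac:(lra)).
      pose proof (Rmin_l (gline f s1 (anchor1 l) r) (gline f s2 (anchor2 l) r)).
      pose proof (Rmax_l (gline f s1 (anchor1 k) r) (gline f s2 (anchor2 (S k)) r)).
      unfold piece in *. lra.
    + pose proof (anchor2_monotone (S k) l Hkl Hl).
      pose proof (gline_steep_antitone f f_01 s2 (anchor2 l) (anchor2 (S k)) r Hs2 ltac:(lra)).
      pose proof (Rmin_r (gline f s1 (anchor1 l) r) (gline f s2 (anchor2 l) r)).
      pose proof (Rmax_r (gline f s1 (anchor1 k) r) (gline f s2 (anchor2 (S k)) r)).
      unfold piece in *. lra.
Qed.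

Lemma pi_fun_affine_on_regions r : 0 <= r <= 1 ->
  exists L, line_ok L /\ affine_on_regions (in_D f p q) [L] (fun s1 s2 => pi_fun f p q s1 s2 r).
Proof.
  intros Hr.
  set (u k := (r - anchor1 k, 0, gomory f (anchor1 k))).
  set (v k := (0, r - anchor2 k, gomory f (anchor2 k))).
  assert (E1 : forall k s1 s2, gline f s1 (anchor1 k) r = affine (u k) s1 s2)
    by (intros; cbn; unfold gline; ring).
  assert (E2 : forall k s1 s2, gline f s2 (anchor2 k) r = affine (v k) s1 s2)
    by (intros; cbn; unfold gline; ring).
  destruct (interleaved_locate anchor1 anchor2 N r (N - 1))
    as [k [Hk [Hin|[HSk Hgap]]]].
  { rewrite anchor2_first. lra. }
  { lia. }
  { rewrite anchor1_last. lra. }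
  - apply (affine_on_regions_switch _ _ (u k) (v k) (u k) (v k)); intros s1 s2 HD Huv;
      rewrite (pi_fun_piece s1 s2 r k HD Hk Hin); unfold piece; rewrite (E1 k s1 s2), (E2 k s1 s2).
    + now apply Rmin_left.
    + now apply Rmin_right.
  - apply (affine_on_regions_switch _ _ (u k) (v (S k)) (v (S k)) (u k)); intros s1 s2 HD Huv;
      rewrite (pi_fun_gap s1 s2 r k HD HSk Hgap), (E1 k s1 s2), (E2 (S k) s1 s2).
    + now apply Rmax_right.
    + now apply Rmax_left.
Qed.

End Anchors.

Theorem proposition1 (f : R) (p q : nat) (n : nat) (r : nat -> R) :
  0 < f < 1 -> (2 <= p)%nat -> (2 <= q)%nat ->
  (forall j, (j < n)%nat -> 0 <= r j < 1) ->
  exists Ls : list (R * R * R),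
    (length Ls <= n)%nat /\
    (forall L, In L Ls -> line_ok L) /\
    forall t1 t2, in_D f p q t1 t2 ->
      forall j, (j < n)%nat ->
        exists alpha beta gamma : R,
          forall s1 s2, in_D f p q s1 s2 -> same_region Ls s1 s2 t1 t2 ->
            pi_fun f p q s1 s2 (r j) = alpha * s1 + beta * s2 + gamma.
Proof.
  intros Hf Hp Hq Hr.
  destruct (common_refinement (in_D f p q) (fun j s1 s2 => pi_fun f p q s1 s2 (r j)) n)
    as [Ls [Hlen [Hok Haff]]].
  { intros j Hj. apply pi_fun_affine_on_regions; auto. specialize (Hr j Hj). lra. }
  exists Ls. split; [exact Hlen | split; [exact Hok|]].
  intros t1 t2 Ht j Hj. exact (Haff j Hj t1 t2 Ht).
Qed.
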